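(* Consider the following random bipartite graph $G$ on $L\cup R$ with $|L|=|R|=n$ (with $n$ divisible by $6$): $L=L_1\cup L_2$, $R=R_1\cup R_2$ with $|L_1|=|R_1|=n/6$ and $|L_2|=|R_2|=5n/6$; every vertex of $L$ is adjacent to every vertex of $R_1$, every vertex of $R$ is adjacent to every vertex of $L_1$, and in addition a uniformly random perfect matching $M$ between $L_2$ and $R_2$ is added; each vertex's adjacency list is a uniformly random permutation of its neighbors. Any deterministic algorithm that accesses $G$ via neighbor queries and pair queries (and knows all degrees and the partition $L_1,L_2,R_1,R_2$) requires $\Omega(n^2)$ queries in expectation to discover $n/3$ edges of $M$.
   Context: A neighbor query $Q_1(u,i)$ returns the $i$-th entry of $u$'s adjacency list; a pair query $Q_2(u,v)$ returns whether $(u,v)$ is an edge. An edge $(u,v)\in M$ is discovered once the answers to the queries made so far uniquely identify $(u,v)$ as an edge of $M$. *)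

From mathcomp Require Import all_boot.
Set Implicit Arguments. Unset Strict Implicit. Unset Printing Implicit Defensive.

(* n = 6*k.  L and R are both indexed by 'I_(6*k);
   L1 = {u | u < k}, L2 = {u | k <= u}; same for R1, R2. *)

Definition vtx (k : nat) := 'I_(6 * k).

(* The matching M is encoded by m : L -> R (m u = M(u) for u in L2; m u = u,
   junk, for u in L1).  An adjacency list is a function from positions to
   option vertices: Some v at positions < degree, None beyond. *)
Definition alist (k : nat) := {ffun vtx k -> option (vtx k)}.
Definition inst (k : nat) :=
  ({ffun vtx k -> vtx k} * {ffun vtx k -> alist k} * {ffun vtx k -> alist k})%type.

Definition imatch k (I : inst k) := I.1.1.
Definition iadjL k (I : inst k) := I.1.2.
Definition iadjR k (I : inst k) := I.2.

Definition gedge k (m : {ffun vtx k -> vtx k}) (u v : vtx k) : bool :=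
  [|| u < k, v < k | m u == v].

Definition listOK k (nb : pred (vtx k)) (f : alist k) : bool :=
  [forall i : vtx k,
     if i < #|nb| then (if f i is Some v then nb v else false) else f i == None]
  && [forall i : vtx k, forall j : vtx k,
        [&& i < #|nb|, j < #|nb| & f i == f j] ==> (i == j)].

Definition valid k (I : inst k) : bool :=
  let m := imatch I in
  [&& [forall u : vtx k, (u < k) ==> (m u == u)],
      injectiveb m,
      [forall u : vtx k, listOK (fun v => gedge m u v) (iadjL I u)] &
      [forall v : vtx k, listOK (fun u => gedge m u v) (iadjR I v)]].

(* Queries: inl (true, u, i) = Q1(u,i) for u in L; inl (false, v, i) = Q1(v,i)
   for v in R; inr (u, v) = Q2(u,v) with u in L, v in R. *)
Definition query k := ((bool * vtx k * vtx k) + (vtx k * vtx k))%type.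
Definition answer k := (option (vtx k) + bool)%type.

Definition ans k (I : inst k) (q : query k) : answer k :=
  match q with
  | inl (s, u, i) => inl (if s then iadjL I u i else iadjR I u i)
  | inr (u, v) => inr (gedge (imatch I) u v)
  end.

Definition strategy k := seq (query k * answer k) -> query k.

Fixpoint hist k (A : strategy k) (I : inst k) (t : nat) : seq (query k * answer k) :=
  match t with
  | 0 => [::]
  | t'.+1 => let h := hist A I t' in let q := A h in rcons h (q, ans I q)
  end.

Definition consistent k (I : inst k) (h : seq (query k * answer k)) : bool :=
  all (fun qa => ans I qa.1 == qa.2) h.

Definition discovered k (h : seq (query k * answer k)) (u v : vtx k) : bool :=
  [forall I : inst k, (valid I && consistent I h) ==> ((k <= u) && (imatch I u == v))].

Definition ndisc k (h : seq (query k * answer k)) : nat :=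
  #|[set u : vtx k | [exists v : vtx k, discovered h u v]]|.

(* min(number of queries until n/3 = 2k edges of M are discovered, T) *)
Definition costT k (A : strategy k) (I : inst k) (T : nat) : nat :=
  find (fun t => 2 * k <= ndisc (hist A I t)) (iota 0 T).

From mathcomp Require Import all_boot fingroup perm zify.
Set Implicit Arguments. Unset Strict Implicit. Unset Printing Implicit Defensive.

(* Say that the M-edge of u is revealed once some answer exhibits it: Q1(u,i) = M(u),
   Q1(M(u),i) = u, or Q2(u,M(u)) = true.  An unrevealed edge (u, M(u)) can only be
   discovered if almost every other u' in L2 is excluded as an alternative partner swap,
   which costs Omega(k) pair queries at u or M(u); hence discovering 2k edges within k^2
   queries reveals k edges.  A step is cheap when it reveals an edge whose endpoints have
   received few queries so far.  Exchanging two partners, or two positions of the queried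
   adjacency list, produces Omega(k) instances with the same history from which the
   original instance can be recovered, so a fixed step is cheap on at most a 3/k fraction
   of the instances.  Edges revealed at other steps sit at expensive vertices, of which
   O(T/k) exist after T queries.  With T = k^2/12 and Markov's inequality, half of the
   instances need T queries. *)

Lemma card_ord_lt N n : n <= N -> #|[set i : 'I_N | i < n]| = n.
Proof.
move=> lenN; rewrite cardsE -sum1_card.
by rewrite (big_ord_narrow (F := fun _ => 1) lenN) sum1_card card_ord.
Qed.

Lemma card_ord_ge N n : n <= N -> #|[set i : 'I_N | n <= i]| = N - n.
Proof.
move=> lenN; rewrite -[N in RHS](card_ord N) -(cardsC [set i : 'I_N | i < n]).
by rewrite card_ord_lt // addKn; apply: eq_card => i; rewrite !inE leqNgt.
Qed.

Lemma card_le_count (X : eqType) (T : finType) (g : X -> option T) (s : seq X) (S : {set T}) :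
  {subset S <= [pred y | Some y \in map g s]} -> #|S| <= count g s.
Proof.
move=> sub; rewrite -size_pmap (leq_trans _ (card_size _)) //.
by apply/subset_leq_card/subsetP => y /sub; rewrite inE mem_pmap.
Qed.

Lemma sum_count_le (T : finType) (X : Type) (P : T -> pred X) (s : seq X) c :
  (forall x, \sum_(u : T) P u x <= c) -> \sum_(u : T) count (P u) s <= c * size s.
Proof.
move=> Pc; elim: s => [|x s IHs]; first by rewrite big1.
by rewrite /= big_split mulnS leq_add.
Qed.

Lemma card_free_positions N deg (i : 'I_N) (P : pred 'I_N) : deg <= N ->
  deg <= #|[set j : 'I_N | [&& j < deg, j != i & ~~ P j]]| + 1 + #|[set j | P j]|.
Proof.
move=> degN; rewrite -{1}(card_ord_lt degN) -(cards1 i) -addnA.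
apply: leq_trans (leq_add (leqnn _) (leq_card_setU _ _).1).
apply: leq_trans (leq_card_setU _ _).1; apply/subset_leq_card/subsetP => j.
by rewrite !inE => ->; case: (j == i); case: (P j).
Qed.

Lemma sum_eq_inj_le1 (T : finType) (T' : eqType) (f : T -> T') (c : T') :
  injective f -> \sum_(u : T) (c == f u) <= 1.
Proof.
move=> finj; rewrite (eq_bigr (fun u => if c == f u then 1 else 0)) => [|u _]; last by case: eqP.
rewrite -big_mkcond sum1dep_card; apply/card_le1_eqP => u1 u2.
by rewrite !inE => /eqP -> /eqP /finj.
Qed.

Lemma markov_card (T : finType) (P : pred T) (f : T -> nat) c :
  c * #|[pred x | P x && (c <= f x)]| <= \sum_(x | P x) f x.
Proof.
rewrite mulnC -sum_nat_const (bigID (fun x => c <= f x) P) /=.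
apply: leq_trans (leq_addr _ _); rewrite (eq_bigl _ _ (fun x => erefl)).
by apply: leq_sum => x /andP [].
Qed.

Lemma double_counting (T U W : finType) (B : pred T) (Q : T -> {set U}) (F : T -> U -> W)
    (W0 : pred W) a :
  (forall I, B I -> a <= #|Q I|) ->
  (forall I u, B I -> u \in Q I -> W0 (F I u)) ->
  (forall I1 u1 I2 u2, B I1 -> u1 \in Q I1 -> B I2 -> u2 \in Q I2 -> F I1 u1 = F I2 u2 ->
      I1 = I2 /\ u1 = u2) ->
  a * #|B| <= #|W0|.
Proof.
move=> leaQ FW Finj; pose S := [set p : T * U | B p.1 && (p.2 \in Q p.1)].
have leBS : a * #|B| <= #|S|.
  have -> : #|S| = \sum_(I | B I) \sum_(u in Q I) 1.
    by rewrite -sum1_card pair_big_dep; apply: eq_bigl => p; rewrite inE.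
  rewrite -sum1_card big_distrr /=.
  by apply: leq_sum => I BI; rewrite muln1 sum1_card leaQ.
rewrite (leq_trans leBS) // -(card_in_imset (f := fun p => F p.1 p.2)).
  by apply/subset_leq_card/subsetP => _ /imsetP [[I u] /[!inE] /andP [BI QIu] ->]; apply: FW.
move=> [I1 u1] [I2 u2] /[!inE] /andP [? ?] /andP [? ?] /= /Finj.
by case=> // -> ->.
Qed.

Lemma tperm_pred (T : finType) (P : pred T) (a b z : T) :
  P a = P b -> P (tperm a b z) = P z.
Proof. by move=> Pab; case: tpermP => [->|->|]. Qed.

Section BipartiteGame.
Variable k : nat.
Local Notation V := (vtx k).
Local Notation hseq := (seq (query k * answer k)).
Implicit Types (nb : pred V) (f : alist k) (I J : inst k) (h : hseq) (s : bool) (t : nat).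
Implicit Types (q : query k) (u x w i j : V).

Lemma listOKP nb f :
  reflect [/\ forall i : V, i < #|nb| -> exists2 v, f i = Some v & nb v,
              forall i : V, #|nb| <= i -> f i = None &
              forall i j : V, i < #|nb| -> j < #|nb| -> f i = f j -> i = j]
          (listOK nb f).
Proof.
apply: (iffP andP) => [[/forallP fOK /forallP finj] | [fSome fNone finj]]; split.
- by move=> i lti; move: (fOK i); rewrite lti; case: (f i) => // v; exists v.
- by move=> i lei; move: (fOK i); rewrite ltnNge lei => /eqP.
- move=> i j lti ltj fij; apply/eqP.
  by move: (finj i) => /forallP /(_ j); rewrite lti ltj fij eqxx.
- apply/forallP => i; case: ifPn => [/fSome [v -> //] | lei].
  by rewrite fNone // leqNgt.
- apply/forallP => i; apply/forallP => j; apply/implyP => /and3P [lti ltj /eqP fij].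
  by apply/eqP; apply: finj.
Qed.

Lemma listOK_mem nb f i v : listOK nb f -> f i = Some v -> nb v.
Proof.
case/listOKP => fSome fNone _ fi; case: (ltnP i #|nb|) => [/fSome [w] | /fNone].
  by rewrite fi => -[->].
by rewrite fi.
Qed.

Lemma listOK_lt nb f i v : listOK nb f -> f i = Some v -> i < #|nb|.
Proof. by case/listOKP => _ fNone _ fi; rewrite ltnNge; apply/negP => /fNone; rewrite fi. Qed.

Lemma listOK_Some_inj nb f i j v : listOK nb f -> f i = Some v -> f j = Some v -> i = j.
Proof.
move=> fOK fi fj; case/listOKP: (fOK) => _ _ finj.
by apply: finj (listOK_lt fOK fi) (listOK_lt fOK fj) _; rewrite fi fj.
Qed.

Lemma eq_listOK nb1 nb2 f : nb1 =1 nb2 -> listOK nb1 f = listOK nb2 f.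
Proof.
move=> nb12; rewrite /listOK (eq_card nb12); congr (_ && _).
by apply: eq_forallb => i; case: ifP => // _; case: (f i).
Qed.

Lemma listOK_omap nb f (p : V -> V) : involutive p -> listOK nb f ->
  listOK (fun z => nb (p z)) [ffun i => omap p (f i)].
Proof.
move=> pK /listOKP [fSome fNone finj].
have cardp : #|(fun z => nb (p z))| = #|nb|.
  rewrite -[RHS](card_image (inv_inj pK)); apply: eq_card => z.
  by rewrite -[z in RHS]pK (mem_image (inv_inj pK)) unfold_in.
apply/listOKP; rewrite cardp; split => [i /fSome [v fi nbv] | i /fNone fi | i j lti ltj].
- by exists (p v); rewrite ?ffunE ?fi ?pK.
- by rewrite ffunE fi.
- rewrite !ffunE => fij; apply: finj => //.
  by case: (f i) (f j) fij => [a|] [b|] //= [/(inv_inj pK) ->].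
Qed.

Lemma listOK_perm nb f (r : V -> V) : involutive r ->
  (forall i, (r i < #|nb|) = (i < #|nb|)) -> listOK nb f -> listOK nb [ffun i => f (r i)].
Proof.
move=> rK ltr /listOKP [fSome fNone finj]; apply/listOKP; split => [i|i|i j].
- by rewrite ffunE -ltr; apply: fSome.
- by rewrite ffunE leqNgt -ltr -leqNgt; apply: fNone.
- by rewrite !ffunE -(ltr i) -(ltr j) => lti ltj /(finj _ _ lti ltj) /(inv_inj rK).
Qed.

(* Side [true] is L and side [false] is R; [mend I s u] is the endpoint on side [s] of the
   M-edge at [u]. *)
Definition adj I s : {ffun V -> alist k} := if s then iadjL I else iadjR I.

Definition nbr (m : {ffun V -> V}) s x : pred V :=
  fun z => if s then gedge m x z else gedge m z x.

Definition mend I s u : V := if s then u else imatch I u.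

Lemma ans_adj I s x i : ans I (inl (s, x, i)) = inl (adj I s x i).
Proof. by case: s. Qed.

Lemma validP I :
  reflect [/\ forall u, u < k -> imatch I u = u, injective (imatch I) &
              forall s x, listOK (nbr (imatch I) s x) (adj I s x)]
          (valid I).
Proof.
apply: (iffP and4P) => [[/forallP m1 /injectiveP minj /forallP okL /forallP okR] | [m1 minj ok]].
  split=> // [u ltuk | [] x]; [|exact: okL | exact: okR].
  by apply/eqP; move: (m1 u); rewrite ltuk.
split; [apply/forallP => u; apply/implyP => /m1 -> // | exact/injectiveP | |].
  by apply/forallP => u; apply: (ok true).
by apply/forallP => v; apply: (ok false).
Qed.

Lemma imatch_ge I u : valid I -> k <= u -> k <= imatch I u.
Proof.
case/validP => m1 minj _ leku; rewrite leqNgt; apply/negP => /[dup] /m1 /minj mu.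
by rewrite mu ltnNge leku.
Qed.

Lemma mend_ge I s u : valid I -> k <= u -> k <= mend I s u.
Proof. by case: s => //= /imatch_ge; apply. Qed.

Lemma mend_inj I s : valid I -> injective (mend I s).
Proof. by case: s => [_ x1 x2 | /validP []]. Qed.

Lemma nbr_mend I s u z : valid I -> k <= u ->
  nbr (imatch I) s (mend I s u) z = (z < k) || (z == mend I (~~ s) u).
Proof.
move=> Iok leku; rewrite /nbr /mend /gedge; case: s.
  by rewrite ltnNge leku eq_sym.
have /validP [_ minj _] := Iok.
by rewrite [imatch I u < k]ltnNge (imatch_ge Iok leku) (inj_eq minj).
Qed.

Lemma card_nbr_mend I s u : valid I -> k <= u -> k < #|nbr (imatch I) s (mend I s u)|.
Proof.
move=> Iok leku; set N := nbr _ _ _.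
have sub : mend I (~~ s) u |: [set z : V | z < k] \subset [set z | N z].
  by apply/subsetP => z; rewrite !inE /N nbr_mend // orbC.
move/subset_leq_card: sub; rewrite cardsU1 card_ord_lt ?leq_pmull // inE cardsE.
by rewrite ltnNge mend_ge.
Qed.

Definition reveals I q u : bool :=
  (k <= u) && match q with
  | inl (s, x, i) => (x == mend I s u) && (adj I s x i == Some (mend I (~~ s) u))
  | inr (x, y) => (x == u) && (y == imatch I u)
  end.

Definition revealed I h : {set V} := [set u | has (fun qa => reveals I qa.1 u) h].

Lemma reveals_uniq I q u1 u2 : reveals I q u1 -> reveals I q u2 -> u1 = u2.
Proof.
case: q => [[[s x] i] | [x y]] /and3P [_ /eqP x1 /eqP i1] /and3P [_ /eqP x2 /eqP i2].
  by case: s x1 x2 i1 i2 => /= [-> -> // | _ _ ->] [].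
by rewrite -x1 -x2.
Qed.

Lemma revealed_rcons I h qa :
  revealed I (rcons h qa) = revealed I h :|: [set u | reveals I qa.1 u].
Proof. by apply/setP => u; rewrite !inE has_rcons orbC. Qed.

Lemma revealed_sub I h1 h2 : {subset h1 <= h2} -> revealed I h1 \subset revealed I h2.
Proof.
move=> h12; apply/subsetP => u; rewrite !inE => /hasP [qa /h12 qa2 rev].
by apply/hasP; exists qa.
Qed.

Lemma inst_eq I J : imatch I = imatch J -> iadjL I = iadjL J -> iadjR I = iadjR J -> I = J.
Proof. by case: I J => [[? ?] ?] [[? ?] ?]; rewrite /imatch /iadjL /iadjR /= => -> -> ->. Qed.

Definition relabel (F : {ffun V -> alist k}) (a b : V) (p : V -> V) : {ffun V -> alist k} :=
  [ffun w => if (w == a) || (w == b) then [ffun i => omap p (F w i)] else F w].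

Definition swap_partners I x u : inst k :=
  let m := imatch I in
  (([ffun w => m (tperm x u w)], relabel (iadjL I) x u (tperm (m x) (m u))),
   relabel (iadjR I) (m x) (m u) (tperm x u)).

Lemma imatch_swap I x u w : imatch (swap_partners I x u) w = imatch I (tperm x u w).
Proof. by rewrite /imatch /= ffunE. Qed.

Lemma adj_swap I x u s :
  adj (swap_partners I x u) s =
  relabel (adj I s) (mend I s x) (mend I s u) (tperm (mend I (~~ s) x) (mend I (~~ s) u)).
Proof. by case: s. Qed.

Lemma swap_partnersK I x u : swap_partners (swap_partners I x u) x u = I.
Proof.
have relabelK (F : {ffun V -> alist k}) a b p : involutive p ->
    relabel (relabel F a b p) a b p = F.
  move=> pK; apply/ffunP => w; rewrite !ffunE; case: ifP => cw; rewrite ?ffunE ?cw //.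
  by apply/ffunP => i; rewrite !ffunE; case: (F w i) => //= z; rewrite pK.
have relabelC (F : {ffun V -> alist k}) a b p : relabel F a b p = relabel F b a p.
  by apply/ffunP => w; rewrite !ffunE orbC.
apply: inst_eq; first by apply/ffunP => w; rewrite !imatch_swap tpermK.
- by rewrite [LHS]/iadjL /= !imatch_swap tpermL tpermR tpermC relabelK //; apply: tpermK.
- by rewrite [LHS]/iadjR /= !imatch_swap tpermL tpermR relabelC relabelK //; apply: tpermK.
Qed.

Lemma valid_swap_partners I x u : valid I -> k <= x -> k <= u -> valid (swap_partners I x u).
Proof.
move=> Iok lekx leku; have /validP [m1 minj ok] := Iok; set m := imatch I.
have [lekmx lekmu] := (imatch_ge Iok lekx, imatch_ge Iok leku).
have ltk_tperm (a b z : V) : k <= a -> k <= b -> (tperm a b z < k) = (z < k).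
  by move=> leka lekb; apply: (@tperm_pred _ (fun z : V => z < k)); rewrite !ltnNge leka lekb.
apply/validP; split => [w ltwk | w1 w2 | s w].
- rewrite imatch_swap tpermD ?m1 //; apply: contraTneq ltwk => <-; rewrite -leqNgt //.
- by rewrite !imatch_swap => /minj /perm_inj.
rewrite adj_swap ffunE; case: ifP => wxu.
  rewrite -(@eq_listOK (fun z => nbr m s w (tperm (mend I (~~ s) x) (mend I (~~ s) u) z)));
    first by apply: listOK_omap (ok s w); apply: tpermK.
  move=> z; rewrite /nbr /gedge; case: s wxu => /= wxu; rewrite imatch_swap.
    rewrite ltk_tperm // -(inj_eq (@perm_inj _ (tperm (m x) (m u)))) tpermK.
    by case/orP: wxu => /eqP ->; rewrite ?tpermL ?tpermR.
  by rewrite ltk_tperm.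
rewrite -(@eq_listOK (nbr m s w)) // => z.
rewrite /nbr /gedge; case: s wxu => /= /norP [wx wu]; rewrite imatch_swap.
  by rewrite tpermD // eq_sym.
congr [|| _, _ | _]; rewrite ![_ == w]eq_sym.
by case: tpermP => [-> | -> | //]; rewrite (negbTE wx) (negbTE wu).
Qed.

Lemma swap_partners_inj I1 I2 w u1 u2 : valid I1 -> k <= w -> k <= u1 ->
  imatch I1 w = imatch I2 w -> swap_partners I1 w u1 = swap_partners I2 w u2 -> I1 = I2 /\ u1 = u2.
Proof.
move=> I1ok lekw leku1 mw FE; have /validP [_ Jinj _] := valid_swap_partners I1ok lekw leku1.
have u12 : u1 = u2 by apply: Jinj; rewrite {2}FE !imatch_swap !tpermR mw.
by subst u2; rewrite -(swap_partnersK I1 w u1) FE swap_partnersK.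
Qed.

Lemma ans_swap_partners I x u q : valid I -> k <= x -> k <= u ->
  ~~ reveals I q x -> ~~ reveals I q u -> q != inr (x, imatch I u) -> q != inr (u, imatch I x) ->
  ans (swap_partners I x u) q = ans I q.
Proof.
move=> Iok lekx leku rx ru qxu qux; have /validP [_ _ ok] := Iok.
case: q rx ru qxu qux => [[[s a] i] | [a b]] rx ru qxu qux.
  rewrite !ans_adj adj_swap ffunE; case: ifP => // axu; rewrite ffunE; congr inl.
  case adj_ai: (adj I s a i) => [z|] //=; congr Some.
  have ltzk : z < k.
    have := listOK_mem (ok s a) adj_ai; move: rx ru adj_ai.
    case/orP: axu => /eqP -> rx ru adj_ai; rewrite nbr_mend // => /orP [// | /eqP zE].
      by move: rx; rewrite /reveals lekx -zE adj_ai !eqxx.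
    by move: ru; rewrite /reveals leku -zE adj_ai !eqxx.
  by apply: tpermD; apply: contraTneq ltzk => <-; rewrite -leqNgt mend_ge.
rewrite /= /gedge imatch_swap; congr (inr [|| _, _ | _]); rewrite ![_ == b]eq_sym.
move: rx ru qxu qux; rewrite /reveals /= lekx leku /=.
have [-> | ax] := eqVneq a x.
  rewrite tpermL /= => /negbTE -> _ qxu _.
  by apply: contraNF qxu => /eqP ->.
have [-> | au] := eqVneq a u.
  rewrite tpermR /= => _ /negbTE -> _ qux.
  by apply: contraNF qux => /eqP ->.
by rewrite tpermD // eq_sym.
Qed.

Definition reorder (F : {ffun V -> alist k}) x (i j : V) : {ffun V -> alist k} :=
  [ffun w => if w == x then [ffun p => F x (tperm i j p)] else F w].

Definition reposition I s x i j : inst k :=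
  if s then ((imatch I, reorder (iadjL I) x i j), iadjR I)
  else ((imatch I, iadjL I), reorder (iadjR I) x i j).

Lemma imatch_reposition I s x i j : imatch (reposition I s x i j) = imatch I.
Proof. by case: s. Qed.

Lemma adj_reposition I s x i j (t : bool) :
  adj (reposition I s x i j) t = if t == s then reorder (adj I s) x i j else adj I t.
Proof. by case: s; case: t. Qed.

Lemma adj_reposition_at I s x i j : adj (reposition I s x i j) s x j = adj I s x i.
Proof. by rewrite adj_reposition eqxx ffunE eqxx ffunE tpermR. Qed.

Lemma repositionK I s x i j : reposition (reposition I s x i j) s x i j = I.
Proof.
have reorderK (F : {ffun V -> alist k}) : reorder (reorder F x i j) x i j = F.
  apply/ffunP => w; rewrite !ffunE; case: eqP => [-> | //].
  by apply/ffunP => p; rewrite !ffunE eqxx ffunE tpermK.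
by case: s I => -[[m L] R]; rewrite /reposition /imatch /iadjL /iadjR /= reorderK.
Qed.

Lemma valid_reposition I s x i j : valid I ->
  i < #|nbr (imatch I) s x| -> j < #|nbr (imatch I) s x| -> valid (reposition I s x i j).
Proof.
case/validP => m1 minj ok lti ltj; apply/validP.
rewrite imatch_reposition; split => // t w; rewrite adj_reposition.
case: eqP => [-> | _ //]; rewrite ffunE; case: eqP => [-> | _ //].
apply: listOK_perm (ok s x); first exact: tpermK.
by move=> p; apply: (@tperm_pred _ (fun p : V => p < #|nbr (imatch I) s x|)); rewrite lti ltj.
Qed.

Lemma reposition_inj I1 I2 s u1 u2 i j1 j2 : valid I1 ->
  adj I1 s (mend I1 s u1) i = Some (mend I1 (~~ s) u1) ->
  adj I2 s (mend I2 s u2) i = Some (mend I2 (~~ s) u2) ->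
  j1 < #|nbr (imatch I1) s (mend I1 s u1)| -> mend I1 s u1 = mend I2 s u2 ->
  reposition I1 s (mend I1 s u1) i j1 = reposition I2 s (mend I2 s u2) i j2 ->
  I1 = I2 /\ j1 = j2.
Proof.
move=> I1ok adj1 adj2 ltj1 x12 FE.
have m12 : imatch I1 = imatch I2.
  by rewrite -(imatch_reposition I1 s (mend I1 s u1) i j1) FE imatch_reposition.
have mend12 (b : bool) v : mend I2 b v = mend I1 b v by rewrite /mend m12.
rewrite !mend12 in x12 adj2 FE; have u12 := mend_inj I1ok x12; subst u2.
set x := mend I1 s u1 in adj1 adj2 FE ltj1.
have /validP [_ _ ok1] := I1ok.
have /validP [_ _ okJ] := valid_reposition I1ok (listOK_lt (ok1 _ _) adj1) ltj1.
have j12 : j1 = j2.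
  apply: (listOK_Some_inj (okJ s x)); first by rewrite adj_reposition_at adj1.
  by rewrite FE adj_reposition_at adj2.
by subst j2; rewrite -(repositionK I1 s x i j1) FE repositionK.
Qed.

Lemma ans_reposition I s x i j q : q != inl (s, x, i) -> q != inl (s, x, j) ->
  ans (reposition I s x i j) q = ans I q.
Proof.
case: q => [[[t a] p] | [a b]] qi qj; last by rewrite /= imatch_reposition.
rewrite !ans_adj adj_reposition; case: (eqVneq t s) qi qj => [-> | _] qi qj //.
rewrite ffunE; case: (eqVneq a x) qi qj => [-> | _] qi qj //.
by rewrite ffunE tpermD //; [apply: contraNneq qi => -> | apply: contraNneq qj => ->].
Qed.

Lemma consistent_ans I J h :
  consistent I h -> (forall qa, qa \in h -> ans J qa.1 = ans I qa.1) -> consistent J h.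
Proof. by move=> /allP hI eqIJ; apply/allP => qa qa_h; rewrite eqIJ //; apply: hI. Qed.

Definition swappable I h x : {set V} :=
  [set u : V | [&& k <= u, u != x, u \notin revealed I h,
              inr (x, imatch I u) \notin map fst h & inr (u, imatch I x) \notin map fst h]].

Lemma swappable_ge I h x u : u \in swappable I h x -> k <= u.
Proof. by rewrite inE => /and5P []. Qed.

Lemma consistent_swap_partners I h x u : valid I -> consistent I h ->
  k <= x -> x \notin revealed I h -> u \in swappable I h x ->
  consistent (swap_partners I x u) h.
Proof.
move=> Iok hI lekx xh /[!inE] /and5P [leku _ uh xu_h ux_h].
apply: (consistent_ans hI) => qa qa_h; apply: ans_swap_partners => //.
- by apply: contra xh => rev; rewrite inE; apply/hasP; exists qa.
- by apply: contra uh => rev; apply/hasP; exists qa.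
- by apply: contra xu_h => /eqP qaE; rewrite -qaE map_f.
- by apply: contra ux_h => /eqP qaE; rewrite -qaE map_f.
Qed.

Lemma consistent_reposition I h s u i j : consistent I h ->
  k <= u -> u \notin revealed I h -> adj I s (mend I s u) i = Some (mend I (~~ s) u) ->
  inl (s, mend I s u, j) \notin map fst h -> consistent (reposition I s (mend I s u) i j) h.
Proof.
move=> hI leku uh adj_i j_h; apply: (consistent_ans hI) => qa qa_h.
apply: ans_reposition; last by apply: contra j_h => /eqP <-; apply: map_f.
apply: contra uh => /eqP qaE; rewrite inE; apply/hasP; exists qa => //.
by rewrite qaE /reveals leku adj_i !eqxx.
Qed.

Definition npair I u h : nat :=
  count (fun qa => if qa.1 is inr (a, b) then (a == u) || (b == imatch I u) else false) h.

Definition nadj s x h : nat :=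
  count (fun qa => if qa.1 is inl (t, a, _) then (t == s) && (a == x) else false) h.

Lemma card_pair_queried_l I x h : valid I ->
  #|[set u | inr (x, imatch I u) \in map fst h]| <= npair I x h.
Proof.
case/validP => _ minj _.
pose g (qa : query k * answer k) : option V :=
  if qa.1 is inr (a, b) then (if a == x then Some b else None) else None.
have -> : [set u | inr (x, imatch I u) \in map fst h] =
          imatch I @^-1: [set y | inr (x, y) \in map fst h] by apply/setP => u; rewrite !inE.
rewrite card_preimset //.
apply: (@leq_trans (count g h)); first apply: card_le_count.
  by move=> y /[!inE] /mapP [qa qa_h qaE]; apply/mapP; exists qa; rewrite // /g -qaE eqxx.
by apply: sub_count => -[[|[a b]] ?]; rewrite /g //=; case: eqP.
Qed.

Lemma card_pair_queried_r I x h :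
  #|[set u | inr (u, imatch I x) \in map fst h]| <= npair I x h.
Proof.
pose g (qa : query k * answer k) : option V :=
  if qa.1 is inr (a, b) then (if b == imatch I x then Some a else None) else None.
apply: (@leq_trans (count g h)); first apply: card_le_count.
  by move=> u /[!inE] /mapP [qa qa_h qaE]; apply/mapP; exists qa; rewrite // /g -qaE eqxx.
by apply: sub_count => -[[|[a b]] ?]; rewrite /g //=; case: eqP; rewrite ?orbT.
Qed.

Lemma card_adj_queried s x h : #|[set j | inl (s, x, j) \in map fst h]| <= nadj s x h.
Proof.
pose g (qa : query k * answer k) : option V :=
  if qa.1 is inl (t, a, j) then (if (t == s) && (a == x) then Some j else None) else None.
apply: (@leq_trans (count g h)); first apply: card_le_count.
  by move=> j /[!inE] /mapP [qa qa_h qaE]; apply/mapP; exists qa; rewrite // /g -qaE !eqxx.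
by apply: sub_count => -[[[[t a] j]|] ?]; rewrite /g //=; case: ifP.
Qed.

Lemma card_swappable I h x : valid I ->
  5 * k - 1 <= #|swappable I h x| + #|revealed I h| + 2 * npair I x h.
Proof.
move=> Iok.
have L2x : 5 * k - 1 <= #|[set u : V | k <= u] :\ x|.
  have := cardsD1 x [set u : V | k <= u]; rewrite card_ord_ge ?leq_pmull //.
  by case: (x \in _) => /=; lia.
apply: (leq_trans L2x).
have sub : [set u : V | k <= u] :\ x \subset
    ((swappable I h x :|: revealed I h) :|: [set u | inr (x, imatch I u) \in map fst h])
      :|: [set u | inr (u, imatch I x) \in map fst h].
  apply/subsetP => u; rewrite !inE => /andP [-> ->] /=.
  by case: has; case: (inr (x, _) \in _); case: (inr (u, _) \in _).
apply: (leq_trans (subset_leq_card sub)); rewrite mul2n -addnn !addnA.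
apply: (leq_trans (leq_card_setU _ _).1); apply: leq_add; last exact: card_pair_queried_r.
apply: (leq_trans (leq_card_setU _ _).1); apply: leq_add; last exact: card_pair_queried_l.
exact: (leq_card_setU _ _).1.
Qed.

Lemma sum_npair I h : valid I -> \sum_u npair I u h <= 2 * size h.
Proof.
case/validP => _ minj _; apply: sum_count_le => -[[q|[a b]] ?] /=; first by rewrite big1.
apply: (@leq_trans (\sum_u (a == u) + \sum_u (b == imatch I u))).
  by rewrite -big_split leq_sum // => u _; case: (a == u); case: (_ == _).
by rewrite (leq_add (sum_eq_inj_le1 _ (@inj_id _))) ?sum_eq_inj_le1.
Qed.

Lemma sum_nadj I s h : valid I -> \sum_u nadj s (mend I s u) h <= size h.
Proof.
move=> Iok; rewrite -[size h]mul1n.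
apply: sum_count_le => -[[[[t a] j]|q] ?] /=; last by rewrite big1.
apply: leq_trans (sum_eq_inj_le1 a (@mend_inj I s Iok)).
by rewrite leq_sum // => u _; case: (t == s).
Qed.

Lemma discovered_imatch I h u v : valid I -> consistent I h ->
  discovered h u v -> (k <= u) && (imatch I u == v).
Proof. by move=> Iok hI /forallP /(_ I); rewrite Iok hI. Qed.

Lemma npair_discovered I h u v : valid I -> consistent I h ->
  discovered h u v -> u \notin revealed I h -> 5 * k - 1 <= #|revealed I h| + 2 * npair I u h.
Proof.
move=> Iok hI disc uh; have /andP [leku /eqP muv] := discovered_imatch Iok hI disc.
suff /eqP noswap : swappable I h u == set0 by have := card_swappable h u Iok; rewrite noswap cards0.
apply/set0Pn => -[u' swap_u']; have /[!inE] /and5P [leku' u'u _ _ _] := swap_u'.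
have Jok := valid_swap_partners Iok leku leku'.
have hJ := consistent_swap_partners Iok hI leku uh swap_u'.
have /andP [_ /eqP] := discovered_imatch Jok hJ disc.
have /validP [_ minj _] := Iok.
by rewrite imatch_swap tpermL -muv => /minj u'E; rewrite u'E eqxx in u'u.
Qed.

Lemma revealed_of_discovered I h : valid I -> consistent I h ->
  size h <= k * k -> 2 * k <= ndisc h -> k <= #|revealed I h|.
Proof.
move=> Iok hI sizeh many; rewrite leqNgt; apply/negP => few.
pose D := [set u : V | [exists v, discovered h u v]] :\: revealed I h.
have bigD : 2 * k - #|revealed I h| <= #|D|.
  rewrite leq_subLR (leq_trans many) // (leq_trans _ (leq_card_setU _ _).1) //.
  by apply/subset_leq_card/subsetP => u; rewrite !inE => ->; rewrite andbT orbN.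
have pairD u : u \in D -> 2 * k <= npair I u h.
  case/setDP => + uh; rewrite inE => /existsP [v disc].
  by have := npair_discovered Iok hI disc uh; lia.
have sumD : 2 * k * #|D| <= 2 * (k * k).
  apply: (@leq_trans (2 * k * #|[pred u | xpredT u && (2 * k <= npair I u h)]|)).
    by rewrite leq_mul2l subset_leq_card ?orbT //; apply/subsetP => u /pairD.
  apply: leq_trans (markov_card _ _ _) _.
  by apply: leq_trans (sum_npair h Iok) _; rewrite leq_mul2l sizeh orbT.
nia.
Qed.

Variable A : strategy k.

Lemma size_hist I t : size (hist A I t) = t.
Proof. by elim: t => //= t IHt; rewrite size_rcons IHt. Qed.

Lemma consistent_hist I t : consistent I (hist A I t).
Proof. by elim: t => //= t IHt; rewrite /consistent all_rcons /= eqxx. Qed.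

Lemma hist_consistent_eq I J t : consistent J (hist A I t) -> hist A J t = hist A I t.
Proof.
elim: t => //= t IHt; rewrite /consistent all_rcons => /andP [/= /eqP ansJ hJ].
by rewrite IHt // ansJ.
Qed.

Lemma hist_sub I t1 t2 : t1 <= t2 -> {subset hist A I t1 <= hist A I t2}.
Proof.
elim: t2 => [|t2 IHt2]; first by rewrite leqn0 => /eqP ->.
rewrite leq_eqVlt => /orP [/eqP -> // | /IHt2 sub qa /sub qa_h].
by rewrite /= mem_rcons inE qa_h orbT.
Qed.

Definition expensive I u h : bool :=
  [|| k <= npair I u h, k <= 2 * nadj true u h | k <= 2 * nadj false (imatch I u) h].

Lemma nadj_cheap I u h s : ~~ expensive I u h -> 2 * nadj s (mend I s u) h < k.
Proof. by rewrite /expensive !negb_or -!ltnNge; case: s => /and3P []. Qed.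

Lemma npair_cheap I u h : ~~ expensive I u h -> npair I u h < k.
Proof. by rewrite /expensive !negb_or -!ltnNge => /and3P []. Qed.

Definition cheap_step I t : bool :=
  let h := hist A I t in
  [exists u, [&& u \notin revealed I h, reveals I (A h) u, #|revealed I h| < k &
                 ~~ expensive I u h]].

Definition cheap_pair_step t : pred (inst k) :=
  [pred I | valid I && cheap_step I t && (if A (hist A I t) is inr _ then true else false)].

Lemma cheap_pair_stepP t I : cheap_pair_step t I -> exists2 u,
  A (hist A I t) = inr (u, imatch I u) &
  [/\ valid I, k <= u, u \notin revealed I (hist A I t), #|revealed I (hist A I t)| < k &
      ~~ expensive I u (hist A I t)].
Proof.
case/andP => /andP [Iok /existsP [u /and4P [uh rev few cheap]]].
move: rev; rewrite /reveals; case: (A _) => [//| [x y]] /and3P [leku /eqP -> /eqP ->] _.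
by exists u.
Qed.

(* For u' swappable, [swap_partners I u u'] answers the first [t] queries like [I] and
   determines both [I] and [u']. *)
Lemma card_cheap_pair_step t : 2 * k * #|cheap_pair_step t| <= #|[pred I : inst k | valid I]|.
Proof.
pose Q I : {set V} := if A (hist A I t) is inr (x, _) then swappable I (hist A I t) x else set0.
pose F I u := if A (hist A I t) is inr (x, _) then swap_partners I x u else I.
apply: (double_counting (Q := Q) (F := F)).
- move=> I /cheap_pair_stepP [u qE [Iok _ _ few cheap]]; rewrite /Q qE.
  have := card_swappable (hist A I t) u Iok; have := npair_cheap cheap.
  lia.
- move=> I u' /cheap_pair_stepP [u qE [Iok leku _ _ _]]; rewrite /Q /F qE => swap_u'.
  by rewrite inE valid_swap_partners // (swappable_ge swap_u').
move=> I1 u1 I2 u2 /cheap_pair_stepP [w1 q1 [I1ok lek1 w1h _ _]].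
move=> + /cheap_pair_stepP [w2 q2 [I2ok lek2 w2h _ _]]; rewrite /Q /F q1 q2 => sw1 sw2 FE.
have hist1 := hist_consistent_eq (consistent_swap_partners I1ok (consistent_hist _ _) lek1 w1h sw1).
have hist2 := hist_consistent_eq (consistent_swap_partners I2ok (consistent_hist _ _) lek2 w2h sw2).
move: q2; rewrite -hist2 -FE hist1 q1 => -[ew mw]; subst w2.
exact: swap_partners_inj I1ok lek1 (swappable_ge sw1) mw FE.
Qed.

Definition cheap_adj_step t : pred (inst k) :=
  [pred I | valid I && cheap_step I t && (if A (hist A I t) is inl _ then true else false)].

Lemma cheap_adj_stepP t I : cheap_adj_step t I -> exists s i u,
  A (hist A I t) = inl (s, mend I s u, i) /\
  [/\ valid I, k <= u, u \notin revealed I (hist A I t),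
      adj I s (mend I s u) i = Some (mend I (~~ s) u) & ~~ expensive I u (hist A I t)].
Proof.
case/andP => /andP [Iok /existsP [u /and4P [uh rev _ cheap]]].
move: rev; rewrite /reveals; case: (A _) => [[[s x] i] | //] /and3P [leku /eqP -> /eqP adj_i] _.
by exists s, i, u.
Qed.

(* The same, moving the revealed entry of the queried list to an unqueried position. *)
Lemma card_cheap_adj_step t : (k - k %/ 2) * #|cheap_adj_step t| <= #|[pred I : inst k | valid I]|.
Proof.
pose Q I : {set V} := if A (hist A I t) is inl (s, x, i) then
  [set j : V | [&& j < #|nbr (imatch I) s x|, j != i & inl (s, x, j) \notin map fst (hist A I t)]]
  else set0.
pose F I j := if A (hist A I t) is inl (s, x, i) then reposition I s x i j else I.
apply: (double_counting (Q := Q) (F := F)).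
- move=> I /cheap_adj_stepP [s [i [u [qE [Iok leku _ _ cheap]]]]]; rewrite /Q qE.
  have degN : #|nbr (imatch I) s (mend I s u)| <= 6 * k.
    by apply: leq_trans (max_card _) _; rewrite card_ord.
  have /= := card_free_positions i (fun j => inl (s, mend I s u, j) \in map fst (hist A I t)) degN.
  have := card_adj_queried s (mend I s u) (hist A I t).
  have := card_nbr_mend s Iok leku; have := nadj_cheap s cheap.
  set C := #|[set j | _ & _]|; set P := #|[set j | inl _ \in _]|.
  lia.
- move=> I j /cheap_adj_stepP [s [i [u [qE [Iok leku _ adj_i _]]]]]; rewrite /Q /F qE.
  rewrite !inE => /and3P [ltj _ _]; apply: valid_reposition => //.
  by have /validP [_ _ ok] := Iok; apply: listOK_lt (ok _ _) adj_i.
move=> I1 j1 I2 j2 /cheap_adj_stepP [s1 [i1 [u1 [q1 [I1ok lek1 u1h adj1 _]]]]].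
move=> + /cheap_adj_stepP [s2 [i2 [u2 [q2 [_ lek2 u2h adj2 _]]]]].
rewrite /Q /F q1 q2 !inE => /and3P [ltj1 _ j1h] /and3P [ltj2 _ j2h] FE.
have hist1 := hist_consistent_eq (consistent_reposition (consistent_hist _ _) lek1 u1h adj1 j1h).
have hist2 := hist_consistent_eq (consistent_reposition (consistent_hist _ _) lek2 u2h adj2 j2h).
move: q2; rewrite -hist2 -FE hist1 q1 => -[es x12 ei]; subst s2 i2.
exact: reposition_inj I1ok adj1 adj2 ltj1 x12 FE.
Qed.

Lemma card_cheap_step t :
  k * #|[pred I | valid I && cheap_step I t]| <= 3 * #|[pred I : inst k | valid I]|.
Proof.
have split_steps : #|[pred I | valid I && cheap_step I t]| <=
                   #|cheap_pair_step t| + #|cheap_adj_step t|.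
  rewrite -cardsE -[#|cheap_pair_step t|]cardsE -[#|cheap_adj_step t|]cardsE.
  apply: leq_trans (leq_card_setU _ _).1.
  apply/subset_leq_card/subsetP => I; rewrite !inE => /andP [Iok cheap].
  by rewrite Iok cheap; case: (A _).
have pairs : k * #|cheap_pair_step t| <= #|[pred I : inst k | valid I]|.
  by apply: leq_trans (card_cheap_pair_step t); rewrite leq_mul2r leq_pmull ?orbT.
have adjs : k * #|cheap_adj_step t| <= 2 * #|[pred I : inst k | valid I]|.
  apply: leq_trans (leq_mul (leqnn 2) (card_cheap_adj_step t)).
  by rewrite mulnA leq_mul2r; apply/orP; right; lia.
apply: (leq_trans (leq_mul (leqnn k) split_steps)).
by rewrite mulnDr (mulSn 2) leq_add.
Qed.

Lemma expensive_rcons I u h qa : expensive I u h -> expensive I u (rcons h qa).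
Proof.
rewrite /expensive /npair /nadj -!cats1 !count_cat.
by case/or3P => ?; apply/or3P; [apply: Or31 | apply: Or32 | apply: Or33]; lia.
Qed.

Definition ncheap I t : nat := count (cheap_step I) (iota 0 t).

Definition nexpensive I h : nat := #|[set u in revealed I h | expensive I u h]|.

Lemma nexpensive_rcons I h qa :
  nexpensive I h +
    #|([set u | reveals I qa.1 u] :\: revealed I h) :&: [set u | expensive I u h]|
  <= nexpensive I (rcons h qa).
Proof.
rewrite /nexpensive -cardsUI (_ : [set u in _ | _] :&: _ = set0) ?cards0 ?addn0; last first.
  by apply/setP => u; rewrite !inE; case: has; rewrite /= ?andbF.
apply/subset_leq_card/subsetP => u; rewrite !inE has_rcons.
case/orP => [/andP [-> /expensive_rcons ->] | /andP [/andP [_ ->] /expensive_rcons ->]] //.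
by rewrite orbT.
Qed.

Lemma card_new_cheap I t (h := hist A I t) : #|revealed I h| < k ->
  #|([set u | reveals I (A h) u] :\: revealed I h) :\: [set u | expensive I u h]|
  <= cheap_step I t.
Proof.
move=> few; set D := (_ :\: _) :\: _.
case: (set_0Vmem D) => [-> | [u]]; first by rewrite cards0.
rewrite !inE => /andP [cheap /andP [uh rev]].
have -> : cheap_step I t by apply/existsP; exists u; rewrite inE uh rev few cheap.
apply/card_le1_eqP => u1 u2; rewrite !inE => /andP [_ /andP [_ rev1]] /andP [_ /andP [_ rev2]].
exact: reveals_uniq rev2 rev1.
Qed.

(* Each newly revealed edge is paid for by a cheap step or by an expensive vertex. *)
Lemma revealed_le_ncheap I t :
  minn #|revealed I (hist A I t)| k <= ncheap I t + nexpensive I (hist A I t).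
Proof.
elim: t => [|t IHt].
  by rewrite (_ : revealed I [::] = set0) ?cards0 ?min0n //; apply/setP => u; rewrite !inE.
set h := hist A I t in IHt *; set N := [set u | reveals I (A h) u].
have ncheapS : ncheap I t.+1 = ncheap I t + cheap_step I t.
  by rewrite /ncheap -addn1 iotaD count_cat /= addn0.
have := nexpensive_rcons I h (A h, ans I (A h)).
rewrite /= -/h ncheapS revealed_rcons -/N.
have [manyR | fewR] := leqP k #|revealed I h|.
  rewrite (minn_idPr manyR) in IHt; rewrite (minn_idPr (leq_trans manyR _)) ?subset_leq_card //.
    by lia.
  exact: subsetUl.
have := card_new_cheap fewR; rewrite (minn_idPl (ltnW fewR)) in IHt.
have := cardsID [set u | expensive I u h] (N :\: revealed I h).
have : #|revealed I h :|: N| <= #|revealed I h| + #|N :\: revealed I h|.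
  apply: leq_trans (leq_card_setU _ _).1; apply/subset_leq_card/subsetP => u.
  by rewrite !inE; case: has.
rewrite -/h -/N => cardRN splitN new_cheap growth.
set a := #|_ :&: _| in splitN growth; set b := #|_ :\: _ :\: _| in splitN new_cheap.
apply: leq_trans (geq_minl _ _) (leq_trans cardRN _); rewrite -splitN addnA.
apply: leq_trans (leq_add (leq_add IHt (leqnn a)) new_cheap) _.
by rewrite -(addnA (ncheap I t)) addnAC leq_add2l.
Qed.

Lemma nexpensive_le I h : valid I -> k * nexpensive I h <= 6 * size h.
Proof.
move=> Iok.
have heavy (f : V -> nat) : k * #|[set u | k <= f u]| <= \sum_u f u.
  apply: leq_trans (markov_card xpredT f k); rewrite leq_mul2l; apply/orP; right.
  by apply/subset_leq_card/subsetP => u; rewrite !inE.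
have adj_heavy s : k * #|[set u | k <= 2 * nadj s (mend I s u) h]| <= 2 * size h.
  by apply: leq_trans (heavy _) _; rewrite -big_distrr leq_mul2l sum_nadj.
have sub : [set u in revealed I h | expensive I u h] \subset
    ([set u | k <= npair I u h] :|: [set u | k <= 2 * nadj true (mend I true u) h])
      :|: [set u | k <= 2 * nadj false (mend I false u) h].
  by apply/subsetP => u; rewrite !inE => /andP [_ /or3P []] ->; rewrite ?orbT.
apply: leq_trans (leq_mul (leqnn k) (subset_leq_card sub)) _.
apply: leq_trans (leq_mul (leqnn k) (leq_card_setU _ _).1) _; rewrite mulnDr.
apply: leq_trans (leq_add (leq_mul (leqnn k) (leq_card_setU _ _).1) (leqnn _)) _.
have -> : 6 * size h = 2 * size h + 2 * size h + 2 * size h by lia.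
rewrite mulnDr !leq_add ?adj_heavy //.
by apply: leq_trans (heavy _) (sum_npair h Iok).
Qed.

Lemma sum_ncheap T :
  k * \sum_(I | valid I) ncheap I T <= T * (3 * #|[pred I : inst k | valid I]|).
Proof.
have -> : \sum_(I | valid I) ncheap I T =
          \sum_(0 <= t < T) #|[pred I | valid I && cheap_step I t]|.
  have iotaE : iota 0 T = index_iota 0 T by rewrite /index_iota subn0.
  rewrite /ncheap iotaE (eq_bigr (fun I => \sum_(0 <= t < T) (cheap_step I t : nat))) => [|I _];
    last first.
    by rewrite -sum1_count big_mkcond.
  rewrite exchange_big /=; apply: eq_bigr => t _.
  rewrite -sum1_card big_mkcond [RHS]big_mkcond; apply: eq_bigr => I _.
  by rewrite inE; case: valid; case: cheap_step.
have -> : T * (3 * #|[pred I : inst k | valid I]|) =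
          \sum_(0 <= t < T) 3 * #|[pred I : inst k | valid I]| by rewrite sum_nat_const_nat subn0.
by rewrite big_distrr leq_sum // => t _; apply: card_cheap_step.
Qed.

Lemma ncheap_of_success I T t : valid I -> 12 * T <= k * k -> t < T ->
  2 * k <= ndisc (hist A I t) -> k <= 2 * ncheap I T.
Proof.
move=> Iok smallT ltT success.
have revealed_t : k <= #|revealed I (hist A I t)|.
  by apply: revealed_of_discovered Iok (consistent_hist I t) _ success; rewrite size_hist; lia.
have revealed_T : k <= #|revealed I (hist A I T)|.
  by apply: (leq_trans revealed_t); apply/subset_leq_card/revealed_sub/hist_sub/ltnW.
have := revealed_le_ncheap I T; rewrite (minn_idPr revealed_T).
have := nexpensive_le (hist A I T) Iok; rewrite size_hist => few_expensive.
have [k0 | kpos] := posnP k; first lia.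
suff : 2 * nexpensive I (hist A I T) <= k by lia.
by rewrite -(leq_pmul2l kpos) mulnCA; lia.
Qed.

Lemma card_many_cheap T : 0 < k -> 12 * T <= k * k ->
  2 * #|[pred I | valid I && (k <= 2 * ncheap I T)]| <= #|[pred I : inst k | valid I]|.
Proof.
move=> kpos smallT; set B := #|_|; set V := #|_|.
have markovB : k * B <= 2 * \sum_(I | valid I) ncheap I T.
  by rewrite big_distrr; apply: (markov_card (@valid k) (fun I => 2 * ncheap I T)).
have := sum_ncheap T; rewrite -/V => sumT.
have kkpos : 0 < k * k by rewrite muln_gt0 kpos.
rewrite -(leq_pmul2l kkpos).
apply: (@leq_trans (12 * T * V)); last by rewrite leq_mul2r smallT orbT.
apply: (@leq_trans (2 * (k * (2 * \sum_(I | valid I) ncheap I T)))).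
  by rewrite mulnCA -mulnA leq_mul2l leq_mul2l markovB !orbT.
rewrite mulnCA; lia.
Qed.

Lemma many_cheap_or_slow I T : valid I -> 12 * T <= k * k ->
  (k <= 2 * ncheap I T) || (T <= costT A I T).
Proof.
move=> Iok smallT; case: leqP => //= few.
rewrite /costT hasNfind ?size_iota //; apply/hasPn => t /[!mem_iota] /andP [_ ltT].
by apply: contraTN few => /(ncheap_of_success Iok smallT ltT); rewrite -leqNgt.
Qed.

Lemma card_slow T : 0 < k -> 12 * T <= k * k ->
  #|[pred I : inst k | valid I]| <= 2 * #|[pred I | valid I && (T <= costT A I T)]|.
Proof.
move=> kpos smallT; have := card_many_cheap kpos smallT.
suff : #|[pred I : inst k | valid I]| <=
       #|[pred I | valid I && (k <= 2 * ncheap I T)]| + #|[pred I | valid I && (T <= costT A I T)]|.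
  by lia.
rewrite -cardsE -[#|[pred I | _ && (k <= _)]|]cardsE -[#|[pred I | _ && (T <= _)]|]cardsE.
apply: leq_trans (leq_card_setU _ _).1.
by apply/subset_leq_card/subsetP => I /[!inE] Iok; rewrite Iok /= many_cheap_or_slow.
Qed.

End BipartiteGame.

Theorem mainTheorem12 :
  exists d : nat, 0 < d /\
  exists k0 : nat, forall k : nat, k0 <= k ->
  forall A : strategy k, exists T : nat,
    (6 * k) ^ 2 * #|[pred I : inst k | valid I]|
      <= d * \sum_(I : inst k | valid I) costT A I T.
Proof.
exists 1728; split => //; exists 12 => k lek A; exists ((k * k) %/ 12).
set T := (k * k) %/ 12; set Slow := [pred I | valid I && (T <= costT A I T)].
have smallT : 12 * T <= k * k by rewrite /T; lia.
have bigT : k * k <= 24 * T by have := leq_mul lek lek; rewrite /T; lia.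
have slowCost : T * #|Slow| <= \sum_(I | valid I) costT A I T.
  exact: (markov_card (@valid k) (fun I => costT A I T)).
apply: (@leq_trans (6 ^ 2 * (k * k) * (2 * #|Slow|))).
  by rewrite expnMn mulnn leq_mul2l card_slow ?orbT // (leq_trans _ lek).
have -> : 6 ^ 2 * (k * k) * (2 * #|Slow|) = 72 * (k * k) * #|Slow| by rewrite mulnCA !mulnA.
apply: leq_trans (leq_mul (leq_mul (leqnn 72) bigT) (leqnn _)) _.
by rewrite -mulnA -(mulnA 24) mulnA leq_mul2l slowCost orbT.
Qed.
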